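(* Let $\mathsf{K}$ be a free simplicial $\mathbb{Z}_2$-complex and let $\lambda_1,\ldots,\lambda_m$ be Fan labelings of $\mathsf{K}$. For any choice of non-negative integers $d_1,\ldots,d_m$ with $d_1+\cdots+d_m=\operatorname{ind}(\mathsf{K})$, there exists a simplex $\sigma$ of $\mathsf{K}$ which, for each $i\in[m]$, has a $d_i$-dimensional face that is alternating with respect to $\lambda_i$.
   Context: A free simplicial $\mathbb{Z}_2$-complex is a simplicial complex with a free simplicial $\mathbb{Z}_2$-action (an involution without fixed points on its geometric realization). A Fan labeling is a labeling of its vertices by non-zero integers such that (i) no two adjacent vertices have labels summing to zero, and (ii) the two vertices of any orbit of the action have labels summing to zero. A simplex is alternating with respect to a labeling if the signs of the labels alternate when its vertices are ordered by increasing absolute value of their labels (in particular the labels have distinct absolute values). The $\mathbb{Z}_2$-index $\operatorname{ind}(\mathsf{K})$ is the minimal $d$ such that there exists a continuous map from (the geometric realization of) $\mathsf{K}$ to the sphere $\mathcal{S}^d$ commuting with the $\mathbb{Z}_2$-actions, the action on $\mathcal{S}^d$ being the antipodal map. *)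

From HB Require Import structures.
From mathcomp Require Import all_boot all_order all_algebra.
From mathcomp Require Import all_classical all_reals all_analysis.
Set Implicit Arguments. Unset Strict Implicit. Unset Printing Implicit Defensive.
Import Order.TTheory GRing.Theory Num.Theory.
Import numFieldNormedType.Exports.

Local Open Scope ring_scope.

Definition simplicial_complex (n : nat) (K : {set {set 'I_n}}) : Prop :=
  [/\ finset.set0 \notin K,
      (forall v : 'I_n, [set v] \in K) &
      (forall s t : {set 'I_n}, s \in K -> t \subset s -> t != finset.set0 -> t \in K)].

(* Geometric realization |K|, in barycentric coordinates inside R^n. *)
Definition realization (R : realType) (n : nat) (K : {set {set 'I_n}})
  : set 'rV[R]_n :=
  fun x => (forall i, 0 <= x ord0 i) /\ (\sum_i x ord0 i = 1) /\
           [set i | x ord0 i != 0] \in K.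
Arguments realization R {n} K.

(* The affine extension of the vertex map nu to |K|. *)
Definition real_act (R : realType) (n : nat) (nu : 'I_n -> 'I_n)
  (x : 'rV[R]_n) : 'rV[R]_n := \row_i x ord0 (nu i).

Definition free_simplicial_Z2_action (R : realType) (n : nat)
  (K : {set {set 'I_n}}) (nu : 'I_n -> 'I_n) : Prop :=
  [/\ (forall v, nu (nu v) = v),
      (forall s, s \in K -> nu @: s \in K) &
      (forall x : 'rV[R]_n,
          realization R K x -> real_act nu x != x)].

Definition sphere (R : realType) (d : nat) : set 'rV[R]_(d.+1) :=
  fun y => \sum_i y ord0 i ^+ 2 = 1.
Arguments sphere : clear implicits.

Definition equiv_map_to_sphere (R : realType) (n : nat)
  (K : {set {set 'I_n}}) (nu : 'I_n -> 'I_n) (d : nat) : Prop :=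
  exists f : 'rV[R]_n -> 'rV[R]_(d.+1),
    [/\ ({within realization R K, continuous f})%classic,
        (forall x, realization R K x -> sphere R d (f x)) &
        (forall x, realization R K x -> f (real_act nu x) = - f x)].

Definition Z2_index (R : realType) (n : nat) (K : {set {set 'I_n}})
  (nu : 'I_n -> 'I_n) (k : nat) : Prop :=
  equiv_map_to_sphere R K nu k /\
  (forall d, equiv_map_to_sphere R K nu d -> (k <= d)%N).

Definition fan_labeling (n : nat) (K : {set {set 'I_n}}) (nu : 'I_n -> 'I_n)
  (lam : 'I_n -> int) : Prop :=
  [/\ (forall v, lam v != 0),
      (forall u v, u != v -> [set u; v] \in K -> lam u + lam v != 0) &
      (forall v, lam v + lam (nu v) = 0)].

Definition alternating_face (n : nat) (lam : 'I_n -> int) (tau : {set 'I_n}) : Prop :=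
  exists s : seq 'I_n,
    [/\ perm_eq s (enum tau),
        sorted (fun u v => `|lam u| < `|lam v|) s &
        sorted (fun u v => (lam u < 0) != (lam v < 0)) s].

From HB Require Import structures.
From mathcomp Require Import all_boot all_order all_algebra.
From mathcomp Require Import all_classical all_reals all_analysis.
From mathcomp Require Import zify ring lra.
Set Implicit Arguments. Unset Strict Implicit. Unset Printing Implicit Defensive.
Import Order.TTheory GRing.Theory Num.Theory.
Import numFieldNormedType.Exports.
Local Open Scope ring_scope.

(* Send a point x of |K| to the vector of moments
     sum_v x_v lam_i(v) |lam_i(v)|^p,   i in [m], p < d_i,
   in R^k with k = d_1 + ... + d_m.  This map is odd, so if it never vanished
   on |K|, normalising it would give an equivariant map |K| -> S^(k-1),
   contradicting ind K = k.  Now let sigma be the support of x.  By the Fan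
   condition, vertices of sigma with the same |lam_i| have the same sign.  If
   sigma has no alternating face of dimension d_i, the signs of lam_i on sigma,
   read by increasing |lam_i|, change fewer than d_i times, so a polynomial P of
   degree < d_i with one root between each sign change satisfies
   lam_i(v) P(|lam_i(v)|) > 0 on sigma.  Then sum_v x_v lam_i(v) P(|lam_i(v)|) > 0
   is a combination of the i-th moments of x, which therefore cannot all vanish. *)

Lemma mulr_gt0_same_sign (R : realDomainType) (a b : R) :
  a != 0 -> b != 0 -> (a < 0) = (b < 0) -> 0 < a * b.
Proof.
move=> a0 b0 sab.
by rewrite lt_neqAle eq_sym mulf_neq0 //= leNgt neq0_mulr_lt0 // sab addbb.
Qed.

Lemma mulr_lt0_opposite_sign (R : realDomainType) (a b : R) :
  a != 0 -> b != 0 -> (a < 0) != (b < 0) -> a * b < 0.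
Proof. by move=> a0 b0; rewrite neq0_mulr_lt0 //; case: (a < 0); case: (b < 0). Qed.

Lemma eq_norm_sign (a b : int) : `|a| = `|b| -> a + b != 0 -> (a < 0) = (b < 0).
Proof.
case: (ltrgt0P a) => ha; case: (ltrgt0P b) => hb;
  rewrite ?(ltr0_norm ha) ?(gtr0_norm ha) ?(ltr0_norm hb) ?(gtr0_norm hb) ?ha ?hb ?normr0;
  move=> eq_abs sum_neq0 //=; lia.
Qed.

Lemma mulr_gt0_opposite (R : realDomainType) (a b p q : R) :
  a * b < 0 -> 0 < b * p -> q < 0 -> 0 < a * (p * q).
Proof.
move=> ab bp q0; rewrite mulrA nmulr_lgt0 //.
have [b0|b0|b0] := ltrgt0P b; last by rewrite b0 mul0r ltxx in bp.
- by rewrite (pmulr_rgt0 _ b0) in bp; rewrite pmulr_llt0 // -(pmulr_llt0 _ b0).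
- by rewrite (nmulr_rgt0 _ b0) in bp; rewrite nmulr_llt0 // -(nmulr_llt0 _ b0).
Qed.

Section AlternatingChains.
Variables (T : finType) (lam : T -> int).

Definition alternating (s : seq T) : bool :=
  sorted (fun u v => `|lam u| < `|lam v|) s &&
  sorted (fun u v => (lam u < 0) != (lam v < 0)) s.

Definition has_alternating_chain (A : {set T}) (L : nat) : Prop :=
  exists s, [/\ {subset s <= A}, size s = L & alternating s].

Definition sign_consistent (A : {set T}) : Prop :=
  {in A &, forall u v, `|lam u| = `|lam v| -> (lam u < 0) = (lam v < 0)}.

Lemma sign_consistentS (A B : {set T}) :
  B \subset A -> sign_consistent A -> sign_consistent B.
Proof. by move=> /fintype.subsetP sBA consA u v /sBA uA /sBA vA; apply: consA. Qed.

Lemma alternating_rcons x s z :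
  alternating (rcons (x :: s) z) =
  [&& alternating (x :: s), `|lam (last x s)| < `|lam z| &
      (lam (last x s) < 0) != (lam z < 0)].
Proof. by rewrite /alternating /= !rcons_path -!andbA; do !bool_congr. Qed.

Lemma alternating_rcons_either x s w v :
  alternating (x :: s) -> `|lam (last x s)| <= `|lam w| -> `|lam w| < `|lam v| ->
  (lam w < 0) != (lam v < 0) ->
  (`|lam (last x s)| = `|lam w| -> (lam (last x s) < 0) = (lam w < 0)) ->
  alternating (rcons (x :: s) w) || alternating (rcons (x :: s) v).
Proof.
rewrite !alternating_rcons; set l := last x s => alt le_lw lt_wv sgn_wv cons_lw.
rewrite alt /=; have [sgn_lv|sgn_lv] := eqVneq (lam l < 0) (lam v < 0).
  have lt_lw : `|lam l| < `|lam w|.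
    rewrite lt_neqAle le_lw andbT; apply/eqP => /cons_lw.
    by rewrite sgn_lv => sgn_vw; rewrite sgn_vw eqxx in sgn_wv.
  by rewrite lt_lw sgn_lv eq_sym sgn_wv.
by apply/orP; right; rewrite (le_lt_trans le_lw lt_wv).
Qed.

(* Any chain below [ws] extends by [ws] or by [vs]. *)
Lemma no_alternating_chain_below (A : {set T}) ws vs L :
  sign_consistent A -> ws \in A -> vs \in A -> `|lam ws| < `|lam vs| ->
  (lam ws < 0) != (lam vs < 0) ->
  ~ has_alternating_chain A L.+1 ->
  ~ has_alternating_chain [set u in A | `|lam u| <= `|lam ws|] L.
Proof.
move=> consA wsA vsA lt_ws_vs sgn_ws_vs noChain [[|x s] [sB sizeB alt]].
  apply: noChain; exists [:: ws]; split; last by [].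
    by move=> u; rewrite inE => /eqP->.
  by rewrite -sizeB.
have /[!inE] /andP[lA le_l_ws] := sB _ (mem_last x s).
have sA : {subset x :: s <= A} by move=> u /sB; rewrite inE => /andP[].
have extend z : z \in A -> alternating (rcons (x :: s) z) -> False.
  move=> zA altz; apply: noChain; exists (rcons (x :: s) z); split => //.
    by move=> u; rewrite mem_rcons inE => /predU1P[->|/sA].
  by rewrite size_rcons sizeB.
have := alternating_rcons_either alt le_l_ws lt_ws_vs sgn_ws_vs (consA _ _ lA wsA).
by case/orP; apply: extend.
Qed.

End AlternatingChains.

Section SignPolynomials.
Variables (R : realFieldType) (T : finType) (lam : T -> int).
Hypothesis lam_neq0 : forall v, lam v != 0.

Definition fits_signs (A : {set T}) (P : {poly R}) : Prop :=
  {in A, forall v, 0 < (lam v)%:~R * P.[`|lam v|%:~R]} /\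
  {in A, forall v, {in A, forall u, `|lam u| <= `|lam v|} ->
    forall t, `|lam v|%:~R <= t -> 0 < (lam v)%:~R * P.[t]}.

Lemma fits_signs_set0 P : fits_signs finset.set0 P.
Proof. by split=> v; rewrite inE. Qed.

Lemma fits_signs_const (A : {set T}) (c : int) : c != 0 ->
  {in A, forall v, (lam v < 0) = (c < 0)} -> fits_signs A (c%:~R)%:P.
Proof.
move=> c0 sgnA; have pos v : v \in A -> 0 < (lam v)%:~R * (c%:~R)%:P.[0] :> R.
  by move=> vA; rewrite hornerC -intrM ltr0z mulr_gt0_same_sign ?sgnA.
by split=> [v vA|v vA _ t _]; rewrite !hornerC in pos *; apply: pos.
Qed.

(* The root [|lam ws| + 1/2] separates [|lam ws|] from the next larger
   (integral) label value, where the sign changes. *)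
Lemma fits_signs_mul_root (A : {set T}) ws vs P :
  ws \in A -> vs \in A -> `|lam ws| < `|lam vs| ->
  {in A, forall u, `|lam ws| < `|lam u| -> (lam u < 0) != (lam ws < 0)} ->
  fits_signs [set u in A | `|lam u| <= `|lam ws|] P ->
  fits_signs A (P * ((`|lam ws|%:~R + 2^-1)%:P - 'X)).
Proof.
move=> wsA vsA lt_ws_vs sgn_above [fitP topP].
set c : R := _ + 2^-1.
have hornerQ t : (P * (c%:P - 'X)).[t] = P.[t] * (c - t).
  by rewrite hornerM hornerD hornerN hornerC hornerX.
have above u t : u \in A -> `|lam ws| < `|lam u| -> `|lam u|%:~R <= t ->
    0 < (lam u)%:~R * (P * (c%:P - 'X)).[t].
  move=> uA lt_ws_u le_u_t; rewrite hornerQ.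
  have le_ws1_t : `|lam ws|%:~R + 1 <= t.
    by apply: le_trans le_u_t; rewrite -[1]/(1%:~R) -intrD ler_int lezD1.
  apply: (@mulr_gt0_opposite _ _ (lam ws)%:~R); last by rewrite /c; lra.
    by rewrite -intrM ltrz0 mulr_lt0_opposite_sign ?sgn_above.
  apply: topP; first by rewrite inE wsA lexx.
    by move=> u'; rewrite inE => /andP[].
  lra.
split=> [v vA|v vA vmax t le_v_t]; last first.
  by apply: above => //; apply: lt_le_trans lt_ws_vs (vmax vs vsA).
have [le_v_ws|lt_ws_v] := lerP `|lam v| `|lam ws|; last exact: above.
rewrite hornerQ mulrA mulr_gt0 ?fitP ?inE ?vA ?le_v_ws // subr_gt0 /c.
have : `|lam v|%:~R <= `|lam ws|%:~R :> R by rewrite ler_int.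
lra.
Qed.

Lemma size_mul_root_le (P : {poly R}) (c : R) d :
  (size P <= d)%N -> (size (P * (c%:P - 'X))%R <= d.+1)%N.
Proof.
move=> sizeP; apply: leq_trans (size_polyMleq _ _) _.
by rewrite -opprB size_polyN size_XsubC addn2.
Qed.

Lemma fits_signs_of_no_alternating_chain d (A : {set T}) :
  sign_consistent lam A -> ~ has_alternating_chain lam A d.+1 ->
  exists2 P : {poly R}, (size P <= d)%N & fits_signs A P.
Proof.
elim: d A => [|d IH] A consA noChain;
  have [->|/set0Pn[v0 v0A]] := eqVneq A finset.set0;
  try by exists 0; rewrite ?size_poly0 //; apply: fits_signs_set0.
  by case: noChain; exists [:: v0]; split=> // u; rewrite inE => /eqP->.
have [vs vsA vsmax] := @arg_maxP _ _ _ v0 (mem A) (fun u => `|lam u|) v0A.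
set B := [set u in A | (lam u < 0) != (lam vs < 0)].
have [B0|/set0Pn[w0 w0B]] := eqVneq B finset.set0.
  exists (lam vs)%:~R%:P; first by rewrite size_polyC; case: (_ != 0).
  apply: fits_signs_const => // u uA.
  have : u \notin B by rewrite B0 inE.
  by rewrite inE uA negbK => /eqP.
have [ws wsB wsmax] := @arg_maxP _ _ _ w0 (mem B) (fun u => `|lam u|) w0B.
have /[!inE] /andP[wsA sgn_ws] : ws \in B := wsB.
have le_ws_vs : `|lam ws| <= `|lam vs| := vsmax _ wsA.
have lt_ws_vs : `|lam ws| < `|lam vs|.
  rewrite lt_neqAle le_ws_vs andbT; apply: contraNneq sgn_ws.
  by move/(consA _ _ wsA vsA)->.
have sgn_above : {in A, forall u, `|lam ws| < `|lam u| -> (lam u < 0) != (lam ws < 0)}.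
  move=> u uA lt_ws_u; have /eqP-> : (lam u < 0) == (lam vs < 0).
    apply: contraTT lt_ws_u => sgn_u; rewrite -leNgt.
    have uB : u \in B by rewrite inE uA sgn_u.
    exact: wsmax uB.
  by rewrite eq_sym.
have consB : sign_consistent lam [set u in A | `|lam u| <= `|lam ws|].
  by apply: sign_consistentS consA; rewrite setIdE subsetIl.
have [P sizeP fitP] :=
  IH _ consB (no_alternating_chain_below consA wsA vsA lt_ws_vs sgn_ws noChain).
exists (P * ((`|lam ws|%:~R + 2^-1)%:P - 'X)); first exact: size_mul_root_le.
exact: fits_signs_mul_root wsA vsA lt_ws_vs sgn_above fitP.
Qed.

End SignPolynomials.

Section Moments.
Variables (R : realFieldType) (T : finType) (lam : T -> int).
Hypothesis lam_neq0 : forall v, lam v != 0.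

Definition moment (x : T -> R) (p : nat) : R :=
  \sum_v x v * ((lam v)%:~R * `|lam v|%:~R ^+ p).

Lemma sum_horner_moment (x : T -> R) (P : {poly R}) d : (size P <= d)%N ->
  \sum_v x v * ((lam v)%:~R * P.[`|lam v|%:~R]) = \sum_(p < d) P`_p * moment x p.
Proof.
move=> sizeP; under eq_bigr do rewrite (horner_coef_wide _ sizeP) !mulr_sumr.
rewrite exchange_big; apply: eq_bigr => p _; rewrite /moment mulr_sumr.
by apply: eq_bigr => v _; ring.
Qed.

Lemma exists_moment_neq0 (x : T -> R) d :
  let A := [set v | x v != 0] in
  (forall v, 0 <= x v) -> A != finset.set0 -> sign_consistent lam A ->
  ~ has_alternating_chain lam A d.+1 -> exists p : 'I_d, moment x p != 0.
Proof.
move=> A x_ge0 /set0Pn[v0 v0A] consA noChain.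
have [P sizeP [fitP _]] :=
  fits_signs_of_no_alternating_chain R lam_neq0 consA noChain.
have term_gt0 v : v \in A -> 0 < x v * ((lam v)%:~R * P.[`|lam v|%:~R]).
  move=> vA; apply: mulr_gt0; last exact: fitP.
  by move: vA; rewrite inE lt0r x_ge0 andbT.
have term_ge0 v : 0 <= x v * ((lam v)%:~R * P.[`|lam v|%:~R]).
  have [/term_gt0/ltW //|] := boolP (v \in A).
  by rewrite inE negbK => /eqP->; rewrite mul0r.
have : 0 < \sum_v x v * ((lam v)%:~R * P.[`|lam v|%:~R]).
  rewrite (bigD1 v0) //=; have := term_gt0 _ v0A.
  have : 0 <= \sum_(v | v != v0) x v * ((lam v)%:~R * P.[`|lam v|%:~R]).
    by apply: sumr_ge0 => v _.
  lra.
rewrite (sum_horner_moment _ sizeP) => pos.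
apply/existsP; apply: contraTT pos => /existsPn all0.
by rewrite big1 ?ltxx // => p _; rewrite (eqP (negbNE (all0 p))) mulr0.
Qed.

End Moments.

Section SphereMaps.
Variable R : realType.

Definition sqnorm d (y : 'rV[R]_d) : R := \sum_j y ord0 j ^+ 2.

Lemma sqnorm_gt0 d (y : 'rV[R]_d) : y != 0 -> 0 < sqnorm y.
Proof.
apply: contraNT; rewrite -leNgt => sq_le0; apply/eqP/rowP => j; rewrite mxE.
have sum0 : \sum_i y ord0 i ^+ 2 = 0.
  by apply/eqP; rewrite eq_le sq_le0 sumr_ge0 // => i _; apply: sqr_ge0.
have := @psumr_eq0P R _ xpredT _ (fun i _ => sqr_ge0 (y ord0 i)) sum0 j isT.
by move/eqP; rewrite sqrf_eq0 => /eqP.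
Qed.

Lemma sqnormZ d a (y : 'rV[R]_d) : sqnorm (a *: y) = a ^+ 2 * sqnorm y.
Proof. by rewrite /sqnorm mulr_sumr; apply: eq_bigr => j _; rewrite mxE exprMn. Qed.

Lemma continuous_sqnorm d : continuous (@sqnorm d).
Proof.
apply: (@continuous_big _ _ +%R 0 xpredT add_continuous _ _
  (fun j (y : 'rV[R]_d) => y ord0 j ^+ 2)).
by move=> j _ y; apply: continuousM; apply: coord_continuous.
Qed.

Definition normalize d (y : 'rV[R]_d) : 'rV[R]_d := (Num.sqrt (sqnorm y))^-1 *: y.

Lemma sphere_normalize d (y : 'rV[R]_d.+1) : y != 0 -> sphere R d (normalize y).
Proof.
move=> y_neq0; have sq_gt0 := sqnorm_gt0 y_neq0.
by rewrite /sphere -/(sqnorm _) sqnormZ exprVn sqr_sqrtr ?ltW // mulVf ?gt_eqF.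
Qed.

Lemma normalizeN d (y : 'rV[R]_d) : normalize (- y) = - normalize y.
Proof. by rewrite /normalize -scaleN1r sqnormZ sqrrN expr1n mul1r scaleN1r scalerN. Qed.

Lemma normalize_continuous d (y : 'rV[R]_d) :
  y != 0 -> {for y, continuous (@normalize d)}.
Proof.
move=> y_neq0; apply: continuousZ; last exact: id.
apply: continuousV; first by rewrite gt_eqF // sqrtr_gt0 sqnorm_gt0.
by apply: continuous_comp; [exact: continuous_sqnorm | exact: sqrt_continuous].
Qed.

Lemma continuous_weighted_sum n d (W : 'I_n -> 'rV[R]_d) :
  continuous (fun x : 'rV[R]_n => \sum_v x ord0 v *: W v).
Proof.
apply: (@continuous_big _ _ +%R 0 xpredT add_continuous _ _
  (fun v (x : 'rV[R]_n) => x ord0 v *: W v)).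
by move=> v _ x; apply: continuousZr_tmp; apply: coord_continuous.
Qed.

Lemma equiv_map_to_sphere_of_odd_weights n (K : {set {set 'I_n}}) nu k
    (W : 'I_n -> 'rV[R]_k.+1) :
  involutive nu -> (forall v, W (nu v) = - W v) ->
  (forall x, realization R K x -> \sum_v x ord0 v *: W v != 0) ->
  equiv_map_to_sphere R K nu k.
Proof.
move=> nuK W_odd W_neq0; pose F (x : 'rV[R]_n) := \sum_v x ord0 v *: W v.
have F_odd x : F (real_act nu x) = - F x.
  rewrite /F -sumrN (reindex_inj (can_inj nuK)) /=.
  by apply: eq_bigr => v _; rewrite mxE nuK W_odd scalerN.
exists (fun x => normalize (F x)); split=> [|x Kx|x Kx].
- apply: continuous_in_subspaceT => x /[!inE] Kx.
  apply: continuous_comp; first exact: continuous_weighted_sum.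
  exact: normalize_continuous (W_neq0 _ Kx).
- exact: sphere_normalize (W_neq0 _ Kx).
- by rewrite /= F_odd normalizeN.
Qed.

Lemma equiv_map_to_sphere_of_odd_family n (K : {set {set 'I_n}}) nu k
    (J : finType) (w : J -> 'I_n -> R) :
  #|J| = k.+1 -> involutive nu -> (forall j v, w j (nu v) = - w j v) ->
  (forall x, realization R K x -> exists j, \sum_v x ord0 v * w j v != 0) ->
  equiv_map_to_sphere R K nu k.
Proof.
move=> cardJ nuK w_odd w_neq0.
pose W v : 'rV[R]_k.+1 := \row_i w (enum_val (cast_ord (esym cardJ) i)) v.
apply: (@equiv_map_to_sphere_of_odd_weights _ _ _ _ W nuK) => [v|x /w_neq0[j]].
  by apply/rowP => i; rewrite !mxE w_odd.
apply: contraNneq => /rowP/(_ (cast_ord cardJ (enum_rank j))).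
rewrite summxE !mxE => sum0; apply/eqP; apply: (eq_trans _ sum0).
by apply: eq_bigr => v _; rewrite /W !mxE cast_ordK enum_rankK.
Qed.

End SphereMaps.

Lemma alternating_face_of_chain n (lam : 'I_n -> int) (A : {set 'I_n}) L :
  has_alternating_chain lam A L ->
  exists2 tau : {set 'I_n}, tau \subset A & #|tau| = L /\ alternating_face lam tau.
Proof.
case=> s [sA sizeL /andP[abs_sorted sgn_sorted]].
have s_uniq : uniq s.
  by apply: sorted_uniq abs_sorted => [u v w|u]; [exact: lt_trans | rewrite ltxx].
exists [set u in s]; first by apply/fintype.subsetP => u; rewrite inE => /sA.
split; first by rewrite cardsE (card_uniqP s_uniq).
exists s; split=> //; apply: uniq_perm s_uniq (enum_uniq _) _ => u.
by rewrite mem_enum inE.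
Qed.

Lemma fan_labeling_odd n (K : {set {set 'I_n}}) nu lam v :
  fan_labeling K nu lam -> lam (nu v) = - lam v.
Proof. by case=> _ _ /(_ v)/eqP; rewrite addrC addr_eq0 => /eqP. Qed.

Lemma fan_labeling_sign_consistent n (K : {set {set 'I_n}}) nu lam s :
  simplicial_complex K -> fan_labeling K nu lam -> s \in K -> sign_consistent lam s.
Proof.
move=> [_ _ K_faces] [_ lam_edge _] sK u v us vs eq_abs.
have [<-//|neq_uv] := eqVneq u v.
apply: eq_norm_sign eq_abs _; apply: lam_edge neq_uv _.
apply: K_faces sK _ _; last by apply/set0Pn; exists u; rewrite !inE eqxx.
by apply/fintype.subsetP => w; rewrite !inE => /orP[] /eqP->.
Qed.

Lemma realization_support (R : realType) n (K : {set {set 'I_n}}) (x : 'rV[R]_n) :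
  realization R K x -> [set v | x ord0 v != 0] != finset.set0.
Proof.
case=> _ [sum1 _]; apply/negP => /eqP supp0.
suff : \sum_v x ord0 v = 0 by rewrite sum1 => /eqP; rewrite oner_eq0.
apply: big1 => v _; apply/eqP; apply: contraT => xv.
have : v \in [set v | x ord0 v != 0] by rewrite inE.
by rewrite supp0 inE.
Qed.

Lemma exists_fan_moment_neq0 (R : realType) n (K : {set {set 'I_n}}) nu m
    (lam : 'I_m -> 'I_n -> int) (d : 'I_m -> nat) :
  simplicial_complex K -> (forall i, fan_labeling K nu (lam i)) ->
  ~ (exists2 sigma, sigma \in K & forall i, exists2 tau : {set 'I_n},
       tau \subset sigma & #|tau| = (d i).+1 /\ alternating_face (lam i) tau) ->
  forall x, realization R K x ->
  exists i (p : 'I_(d i)), moment (lam i) (fun v => x ord0 v) p != 0.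
Proof.
move=> KK fan noSimplex x Kx; have suppA := realization_support Kx.
case: Kx => x_ge0 [_ AK]; set A := [set v | x ord0 v != 0] in suppA AK.
have [i noFace] : exists i, ~ exists2 tau : {set 'I_n},
    tau \subset A & #|tau| = (d i).+1 /\ alternating_face (lam i) tau.
  apply: contrapT => allFaces; apply: noSimplex; exists A => // i.
  by apply: contrapT => noFace; apply: allFaces; exists i.
have noChain : ~ has_alternating_chain (lam i) A (d i).+1.
  by move/alternating_face_of_chain.
have [lam_neq0 _ _] := fan i.
have [p moment_p] := exists_moment_neq0 lam_neq0 x_ge0 suppA
  (fan_labeling_sign_consistent KK (fan i) AK) noChain.
by exists i, p.
Qed.

Theorem theorem3p1 (R : realType) (n : nat) (K : {set {set 'I_n}})
  (nu : 'I_n -> 'I_n) (m : nat) (lam : 'I_m -> 'I_n -> int)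
  (d : 'I_m -> nat) (k : nat) :
  (0 < n)%N ->
  simplicial_complex K ->
  free_simplicial_Z2_action R K nu ->
  (forall i, fan_labeling K nu (lam i)) ->
  Z2_index R K nu k ->
  (\sum_(i < m) d i)%N = k ->
  exists2 sigma, sigma \in K &
    forall i : 'I_m, exists2 tau : {set 'I_n},
      tau \subset sigma & (#|tau| = (d i).+1)%N /\ alternating_face (lam i) tau.
Proof.
move=> n_gt0 KK [nuK _ _] fan [_ kmin] sum_d.
case: k => [|k] in sum_d kmin *.
  pose v := Ordinal n_gt0; exists [set v]; first by case: KK.
  move=> i; exists [set v] => //; split; last by exists [:: v]; rewrite enum_set1.
  by move/eqP: sum_d; rewrite sum_nat_eq0 cards1 => /forallP/(_ i)/eqP->.
apply: contrapT => noSimplex.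
pose J := {i : 'I_m & 'I_(d i)}.
have cardJ : #|{: J}| = k.+1.
  rewrite card_tagged -sum_d sumnE big_map big_enum /=.
  by apply: eq_bigr => i _; rewrite card_ord.
pose w (j : J) v : R := (lam (tag j) v)%:~R * `|lam (tag j) v|%:~R ^+ tagged j.
have w_odd j v : w j (nu v) = - w j v.
  by rewrite /w (fan_labeling_odd _ (fan _)) normrN intrN mulNr.
have w_neq0 x : realization R K x -> exists j, \sum_v x ord0 v * w j v != 0.
  case/(exists_fan_moment_neq0 KK fan noSimplex) => i [p moment_p].
  by exists (Tagged (fun i => 'I_(d i)) p).
have := kmin k (equiv_map_to_sphere_of_odd_family cardJ nuK w_odd w_neq0).
by rewrite ltnn.
Qed.
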